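(* Consider classical propositional logic over a set $V$ of propositional variables, and suppose that for every disjoint cover $X',X''$ of $V$, the relation $\preceq$ on $(\Pi V\times\Pi V)\cup(\Pi X'\times\Pi X')\cup(\Pi X''\times\Pi X'')$ is a smooth (generalized) Hamming relation. Define $\beta\mathrel{|\!\sim}\gamma$ iff $\mu(M(\beta))\subseteq M(\gamma)$. Then for all formulas $\phi,\psi$ with $\phi\mathrel{|\!\sim}\psi$ there is a formula $\alpha$ with $var(\alpha)\subseteq var(\phi)\cap var(\psi)$ such that $\phi\vdash\alpha$ and $\alpha\mathrel{|\!\sim}\psi$.
   Context: For $Y\subseteq V$, $\Pi Y$ is the set of assignments $Y\to\{\mathrm{TRUE},\mathrm{FALSE}\}$; $M(\phi)\subseteq\Pi V$ is the set of models of $\phi$; $var(\phi)$ is the set of variables occurring in $\phi$. For $\sigma\in\Pi V$ write $\sigma=\sigma'\circ\sigma''$ with $\sigma'=\sigma\upharpoonright X'$, $\sigma''=\sigma\upharpoonright X''$. $\preceq$ is a (generalized) Hamming relation for the cover $X',X''$ iff $\preceq$ is reflexive and for all $\sigma,\tau\in\Pi V$: $\sigma\preceq\tau\iff(\sigma'\preceq\tau'$ and $\sigma''\preceq\tau'')$. $x\prec y$ means $x\preceq y$ and $x\neq y$. For a set $A$ of (partial) models, $\mu(A):=\{x\in A:\neg\exists x'\in A.\,x'\prec x\}$; $\preceq$ is smooth iff for every such $A$ and $x\in A-\mu(A)$ there is $x'\in\mu(A)$ with $x'\prec x$. *)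

From Stdlib Require Import Classical.

Set Implicit Arguments.

Inductive form (V : Type) : Type :=
| FVar : V -> form V
| FTop : form V
| FBot : form V
| FNeg : form V -> form V
| FAnd : form V -> form V -> form V
| FOr  : form V -> form V -> form V
| FImp : form V -> form V -> form V.

Arguments FTop {V}.
Arguments FBot {V}.

Definition model (V : Type) := V -> bool.

Fixpoint sat (V : Type) (s : model V) (f : form V) : Prop :=
  match f with
  | FVar v => s v = true
  | FTop => True
  | FBot => False
  | FNeg g => ~ sat s g
  | FAnd g h => sat s g /\ sat s h
  | FOr g h => sat s g \/ sat s h
  | FImp g h => sat s g -> sat s h
  end.

Definition Mod (V : Type) (f : form V) : model V -> Prop := fun s => sat s f.

Fixpoint occurs (V : Type) (v : V) (f : form V) : Prop :=
  match f with
  | FVar w => w = v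
  | FTop | FBot => False
  | FNeg g => occurs v g
  | FAnd g h | FOr g h | FImp g h => occurs v g \/ occurs v h
  end.

(* Classical consequence phi |- alpha (semantic, via completeness). *)
Definition entails (V : Type) (f g : form V) : Prop :=
  forall s : model V, sat s f -> sat s g.

Definition pmodel (V : Type) (Y : V -> Prop) := {v : V | Y v} -> bool.

Definition restr (V : Type) (Y : V -> Prop) (s : model V) : pmodel Y :=
  fun x => s (proj1_sig x).

Definition strict (T : Type) (le : T -> T -> Prop) (x y : T) : Prop :=
  le x y /\ x <> y.

Definition mu (T : Type) (le : T -> T -> Prop) (A : T -> Prop) : T -> Prop :=
  fun x => A x /\ ~ (exists x', A x' /\ strict le x' x).

Definition smooth (T : Type) (le : T -> T -> Prop) : Prop :=
  forall (A : T -> Prop) (x : T), A x -> ~ mu le A x ->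
    exists x', mu le A x' /\ strict le x' x.

Definition reflexive (T : Type) (le : T -> T -> Prop) : Prop := forall x, le x x.

Definition disjoint_cover (V : Type) (X1 X2 : V -> Prop) : Prop :=
  (forall v, X1 v \/ X2 v) /\ (forall v, ~ (X1 v /\ X2 v)).

(* The relation on (Pi V x Pi V) u (Pi X' x Pi X') u (Pi X'' x Pi X'') for all
   disjoint covers X', X'' is given by [leV] on total models together with a
   family [leP Y] on partial models over each subset Y. *)
Definition hamming (V : Type) (leV : model V -> model V -> Prop)
  (leP : forall Y : V -> Prop, pmodel Y -> pmodel Y -> Prop) : Prop :=
  reflexive leV /\ (forall Y, reflexive (leP Y)) /\
  forall X1 X2 : V -> Prop, disjoint_cover X1 X2 ->
    forall s t : model V,
      leV s t <-> (leP X1 (restr X1 s) (restr X1 t) /\ leP X2 (restr X2 s) (restr X2 t)).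

Definition nmcons (V : Type) (leV : model V -> model V -> Prop) (b g : form V) : Prop :=
  forall s, mu leV (Mod b) s -> Mod g s.

(* Let J be the set of variables shared by phi and psi, and let alpha be phi with all its
   other variables existentially quantified away, so that the models of alpha are the
   models agreeing on J with some model of phi.  Take a minimal model s of alpha.  By
   smoothness, among the models of phi that agree with s outside var(phi) there is a
   minimal one x lying below a model of phi that agrees with s on J.  Because a Hamming
   relation compares models coordinate block by coordinate block, the minimality of s
   forces x to agree with s on J, and then the minimality of x in that slice makes it
   minimal among all models of phi.  Hence x satisfies psi, and s agrees with x on
   every variable of psi. *)
From Stdlib Require Import Classical ClassicalEpsilon FunctionalExtensionality List.

Set Implicit Arguments.

Definition agree_on (V : Type) (X : V -> Prop) (s t : model V) : Prop :=
  forall v, X v -> s v = t v.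

Definition patch (V : Type) (X : V -> Prop) (s t : model V) : model V :=
  fun v => if excluded_middle_informative (X v) then s v else t v.

Definition proj_on (V : Type) (J : V -> Prop) (A : model V -> Prop) : model V -> Prop :=
  fun s => exists t, A t /\ agree_on J t s.

Section Models.
Variable V : Type.
Implicit Types (s t : model V) (X : V -> Prop).

Lemma agree_on_sym X s t : agree_on X s t -> agree_on X t s.
Proof. intros H v Hv; symmetry; auto. Qed.

Lemma patch_on X s t v : X v -> patch X s t v = s v.
Proof. unfold patch; destruct (excluded_middle_informative (X v)); tauto. Qed.

Lemma patch_off X s t v : ~ X v -> patch X s t v = t v.
Proof. unfold patch; destruct (excluded_middle_informative (X v)); tauto. Qed.

Lemma restr_agree X s t : agree_on X s t -> restr X s = restr X t.
Proof. intros H; apply functional_extensionality; intros [v Hv]; apply H, Hv. Qed.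

End Models.

Section Formulas.
Variable V : Type.
Implicit Types (s t : model V) (f : form V) (L : list V).

Lemma sat_agree s t f : agree_on (fun v => occurs v f) s t -> (sat s f <-> sat t f).
Proof.
  induction f; simpl; intros H; try tauto;
    try (rewrite IHf1, IHf2 by (intros w Hw; auto); tauto).
  rewrite H by reflexivity; tauto.
Qed.

Definition upd s (v : V) (b : bool) : model V := patch (fun w => w = v) (fun _ => b) s.

Fixpoint subst (v : V) (b : bool) f : form V :=
  match f with
  | FVar w =>
      if excluded_middle_informative (w = v) then (if b then FTop else FBot) else FVar w
  | FTop => FTop
  | FBot => FBot
  | FNeg g => FNeg (subst v b g)
  | FAnd g h => FAnd (subst v b g) (subst v b h)
  | FOr g h => FOr (subst v b g) (subst v b h)
  | FImp g h => FImp (subst v b g) (subst v b h)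
  end.

Lemma sat_subst s v b f : sat s (subst v b f) <-> sat (upd s v b) f.
Proof.
  induction f; simpl; try tauto.
  unfold upd, patch; destruct (excluded_middle_informative (v0 = v)).
  - destruct b; simpl; intuition discriminate.
  - simpl; tauto.
Qed.

Lemma occurs_subst w v b f : occurs w (subst v b f) -> occurs w f /\ w <> v.
Proof.
  induction f; simpl; try tauto;
    try (intros [H | H]; [apply IHf1 in H | apply IHf2 in H]; tauto).
  destruct (excluded_middle_informative (v0 = v)).
  - destruct b; simpl; tauto.
  - simpl; intros <-; auto.
Qed.

Definition fexists (v : V) f : form V := FOr (subst v true f) (subst v false f).

Lemma sat_fexists s v f : sat s (fexists v f) <-> exists b, sat (upd s v b) f.
Proof.
  unfold fexists; simpl; rewrite !sat_subst; split.
  - intros [H | H]; eauto.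
  - intros [[] H]; auto.
Qed.

Lemma occurs_fexists w v f : occurs w (fexists v f) -> occurs w f /\ w <> v.
Proof. intros [H | H]; apply occurs_subst in H; exact H. Qed.

Definition forget L f : form V := fold_right fexists f L.

Lemma sat_forget L f s :
  sat s (forget L f) <-> exists t, sat t f /\ agree_on (fun w => ~ In w L) t s.
Proof.
  revert s; induction L as [| a L IH]; intros s; cbn [forget fold_right].
  - split; [intros H; exists s; split; [exact H | intros w _; reflexivity] |].
    intros [t [Ht Hts]]; apply (sat_agree (s := t)); [intros w _; apply Hts; auto | exact Ht].
  - rewrite sat_fexists; split.
    + intros [b Hb]; apply IH in Hb as [t [Ht Hts]]; exists t; split; [exact Ht |].
      intros w Hw; simpl in Hw; rewrite Hts by tauto; apply patch_off; intros ->; tauto.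
    + intros [t [Ht Hts]]; exists (t a); apply IH; exists t; split; [exact Ht |].
      intros w Hw; unfold upd, patch.
      destruct (excluded_middle_informative (w = a)); [subst; reflexivity |].
      apply Hts; simpl; intros [-> | HwL]; tauto.
Qed.

Lemma occurs_forget w L f : occurs w (forget L f) -> occurs w f /\ ~ In w L.
Proof.
  induction L as [| a L IH]; simpl; [tauto |].
  intros H; apply occurs_fexists in H as [H Hne]; apply IH in H; intuition.
Qed.

Fixpoint vars f : list V :=
  match f with
  | FVar w => w :: nil
  | FTop | FBot => nil
  | FNeg g => vars g
  | FAnd g h | FOr g h | FImp g h => vars g ++ vars h
  end.

Lemma occurs_vars w f : occurs w f -> In w (vars f).
Proof. induction f; simpl; try tauto; intros H; apply in_or_app; tauto. Qed.

Lemma projection_formula f (J : V -> Prop) :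
  exists alpha : form V,
    (forall v, occurs v alpha -> occurs v f /\ J v) /\
    forall s, sat s alpha <-> proj_on (fun v => occurs v f /\ J v) (Mod f) s.
Proof.
  set (L := filter (fun w => if excluded_middle_informative (J w) then false else true)
                   (vars f)).
  assert (HL : forall w, In w L <-> In w (vars f) /\ ~ J w).
  { intros w; unfold L; rewrite filter_In.
    destruct (excluded_middle_informative (J w)); intuition discriminate. }
  exists (forget L f); split.
  - intros v Hv; apply occurs_forget in Hv as [Hv HvL]; split; [exact Hv |].
    apply NNPP; intros HJ; apply HvL, HL; split; [apply occurs_vars |]; assumption.
  - intros s; rewrite sat_forget; split.
    + intros [t [Ht Hts]]; exists t; split; [exact Ht |].
      intros w [_ Hw]; apply Hts; rewrite HL; tauto.
    + intros [t [Ht Hts]]; exists (patch (fun w => In w L) t s); split.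
      * apply (sat_agree (s := t)); [| exact Ht]; intros w Hw.
        destruct (classic (In w L)) as [HwL | HwL].
        -- rewrite patch_on by exact HwL; reflexivity.
        -- rewrite patch_off by exact HwL; apply Hts; split; [exact Hw |].
           apply NNPP; intros HJ; apply HwL, HL; split; [apply occurs_vars |]; assumption.
      * intros w Hw; apply patch_off, Hw.
Qed.

End Formulas.

Section MinimalElements.
Variables (T : Type) (le : T -> T -> Prop).

Lemma mu_ext {A B : T -> Prop} {x : T} : (forall y, A y <-> B y) -> mu le A x -> mu le B x.
Proof.
  intros HAB [Hx Hmin]; split; [apply HAB, Hx |].
  intros [y [Hy Hyx]]; apply Hmin; exists y; split; [apply HAB |]; assumption.
Qed.

Lemma mu_le_eq {A : T -> Prop} {x y : T} : mu le A x -> A y -> le y x -> y = x.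
Proof. intros [_ Hmin] Hy Hyx; apply NNPP; intros Hne; apply Hmin; exists y; split; [| split]; assumption. Qed.

Lemma smooth_below {A : T -> Prop} {x : T} :
  reflexive le -> smooth le -> A x -> exists y, mu le A y /\ le y x.
Proof.
  intros Hrefl Hsmooth Hx.
  destruct (classic (mu le A x)) as [Hmu | Hmu]; [exists x; auto |].
  destruct (Hsmooth A x Hx Hmu) as [y [Hy [Hyx _]]]; eauto.
Qed.

End MinimalElements.

Section HammingLifting.
Variables (V : Type) (leV : model V -> model V -> Prop)
  (leP : forall Y : V -> Prop, pmodel Y -> pmodel Y -> Prop).
Hypothesis Hham : hamming leV leP.

Lemma hamming_le_local (X : V -> Prop) (x y z w : model V) :
  leV x y -> agree_on X z x -> agree_on X w y -> agree_on (fun v => ~ X v) z w -> leV z w.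
Proof.
  destruct Hham as [_ [lePrefl Hsplit]]; intros Hxy Hzx Hwy Hzw.
  assert (Hcover : disjoint_cover X (fun v => ~ X v)) by (split; intros v; tauto).
  apply (Hsplit _ _ Hcover); split.
  - rewrite (restr_agree Hzx), (restr_agree Hwy); apply (Hsplit _ _ Hcover), Hxy.
  - rewrite (restr_agree Hzw); apply lePrefl.
Qed.

Hypothesis Hsmooth : smooth leV.
Variables (A : model V -> Prop) (X J : V -> Prop).
Hypothesis A_local : forall s t, agree_on X s t -> A s -> A t.
Hypothesis J_sub_X : forall v, J v -> X v.
Variable s : model V.
Hypothesis s_min : mu leV (proj_on J A) s.

Lemma min_below_agrees (x x0 : model V) :
  A x -> leV x x0 -> agree_on J x0 s -> agree_on J x s.
Proof.
  intros Hx Hxx0 Hx0s.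
  assert (Hz : patch J x s = s).
  { apply (mu_le_eq s_min).
    - exists x; split; [exact Hx |]; intros v Hv; symmetry; apply patch_on, Hv.
    - apply (hamming_le_local (X := J) Hxx0); [| apply agree_on_sym, Hx0s |].
      + intros v Hv; apply patch_on, Hv.
      + intros v Hv; apply patch_off, Hv. }
  intros v Hv; rewrite <- Hz, patch_on by exact Hv; reflexivity.
Qed.

Let slice (y : model V) : Prop := A y /\ agree_on (fun v => ~ X v) y s.

Lemma slice_min_is_min (x : model V) : mu leV slice x -> agree_on J x s -> mu leV A x.
Proof.
  intros Hxmin HxJ; pose proof (proj1 Hxmin) as [Hx Hxout].
  split; [exact Hx |]; intros [y [Hy [Hyx Hne]]]; apply Hne.
  (* A model y below x coincides with x on X by minimality of x in the slice, and
     outside X by minimality of s, since patching s onto y over X keeps it in the projection. *)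
  assert (Hy' : patch X y x = x).
  { apply (mu_le_eq Hxmin).
    - split.
      + apply (A_local (s := y)); [intros v Hv; symmetry; apply patch_on, Hv | exact Hy].
      + intros v Hv; rewrite patch_off by exact Hv; apply Hxout, Hv.
    - apply (hamming_le_local (X := X) Hyx); [| intros v _; reflexivity |].
      + intros v Hv; apply patch_on, Hv.
      + intros v Hv; apply patch_off, Hv. }
  assert (Hy'' : patch X s y = s).
  { apply (mu_le_eq s_min).
    - exists x; split; [exact Hx |].
      intros v Hv; rewrite patch_on by (apply J_sub_X, Hv); apply HxJ, Hv.
    - apply (hamming_le_local (X := fun v => ~ X v) Hyx).
      + intros v Hv; apply patch_off, Hv.
      + apply agree_on_sym, Hxout.
      + intros v Hv; apply patch_on, NNPP, Hv. }
  apply functional_extensionality; intros v.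
  destruct (classic (X v)) as [Hv | Hv].
  - rewrite <- Hy', patch_on by exact Hv; reflexivity.
  - rewrite Hxout, <- Hy'', patch_off by exact Hv; reflexivity.
Qed.

Lemma mu_proj_lift :
  exists x, mu leV A x /\ agree_on J x s /\ agree_on (fun v => ~ X v) x s.
Proof.
  destruct (proj1 s_min) as [t [Ht Hts]].
  assert (Hx0 : slice (patch X t s)).
  { split.
    - apply (A_local (s := t)); [intros v Hv; symmetry; apply patch_on, Hv | exact Ht].
    - intros v Hv; apply patch_off, Hv. }
  destruct (smooth_below (proj1 Hham) Hsmooth Hx0) as [x [Hxmin Hxx0]].
  assert (HxJ : agree_on J x s).
  { apply (min_below_agrees (proj1 (proj1 Hxmin)) Hxx0).
    intros v Hv; rewrite patch_on by (apply J_sub_X, Hv); apply Hts, Hv. }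
  exists x; split; [apply slice_min_is_min; assumption |].
  split; [exact HxJ | apply (proj2 (proj1 Hxmin))].
Qed.

End HammingLifting.

Theorem corollary4p11 (V : Type) (leV : model V -> model V -> Prop)
  (leP : forall Y : V -> Prop, pmodel Y -> pmodel Y -> Prop) :
  hamming leV leP ->
  smooth leV ->
  (forall Y : V -> Prop, smooth (leP Y)) ->
  forall phi psi : form V, nmcons leV phi psi ->
    exists alpha : form V,
      (forall v, occurs v alpha -> occurs v phi /\ occurs v psi) /\
      entails phi alpha /\ nmcons leV alpha psi.
Proof.
  intros Hham Hsmooth _ phi psi Hcons.
  destruct (projection_formula phi (fun v => occurs v psi)) as [alpha [Hvars Hsem]].
  exists alpha; split; [exact Hvars | split].
  - intros s Hs; apply Hsem; exists s; split; [exact Hs | intros v _; reflexivity].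
  - intros s Hs.
    destruct (mu_proj_lift Hham Hsmooth (A := Mod phi) (X := fun v => occurs v phi)
                (J := fun v => occurs v phi /\ occurs v psi))
      with (s := s) as [x [Hx [HxJ Hxout]]].
    + intros t u Htu; exact (proj1 (sat_agree phi Htu)).
    + intros v [Hv _]; exact Hv.
    + exact (mu_ext Hsem Hs).
    + apply (sat_agree (s := x)); [| apply Hcons, Hx].
      intros v Hv; destruct (classic (occurs v phi)); [apply HxJ | apply Hxout]; tauto.
Qed.
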